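(* Let $M,N$ be complete pointed metric spaces and $f\colon M\to N$ a Lipschitz map with $f(0_M)=0_N$. If $f(M)$ is totally bounded in $N$ and $f$ is uniformly locally flat, i.e. $\displaystyle\lim_{d(x,y)\to0}\frac{d(f(x),f(y))}{d(x,y)}=0$, then $\widehat f\colon\mathcal F(M)\to\mathcal F(N)$ is compact.
   Context: Scalars are $\mathbb K=\mathbb R$ or $\mathbb C$. For a pointed metric space $(M,d,0_M)$, $\mathrm{Lip}_0(M)$ denotes the Banach space of Lipschitz functions $g\colon M\to\mathbb K$ with $g(0_M)=0$ normed by the best Lipschitz constant; $\delta(x)\in\mathrm{Lip}_0(M)^*$ is evaluation at $x$; the Lipschitz-free space $\mathcal F(M)$ is the norm-closed linear span of $\{\delta(x):x\in M\}$ in $\mathrm{Lip}_0(M)^*$. For a Lipschitz map $f\colon M\to N$ with $f(0_M)=0_N$, $\widehat f\colon\mathcal F(M)\to\mathcal F(N)$ is the unique bounded linear operator with $\widehat f(\delta(x))=\delta(f(x))$ for all $x\in M$. *)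

From HB Require Import structures.
From mathcomp Require Import all_boot all_order all_algebra.
From mathcomp Require Import reals complex.
Set Implicit Arguments. Unset Strict Implicit. Unset Printing Implicit Defensive.
Import Order.TTheory GRing.Theory Num.Theory.
Local Open Scope ring_scope.

Definition scal (R : realType) (b : bool) : numFieldType :=
  if b then (R[i] : numFieldType) else (R : numFieldType).

Definition embed (R : realType) (b : bool) : R -> scal R b :=
  match b return R -> scal R b with
  | true => fun r : R => ((r%:C)%C : R[i])
  | false => fun r : R => r
  end.

Record metric (R : realType) (M : Type) := Metric {
  dist :> M -> M -> R;
  dist_ge0 : forall x y, 0 <= dist x y;
  dist_eq0 : forall x y, dist x y = 0 <-> x = y;
  dist_sym : forall x y, dist x y = dist y x;
  dist_tri : forall x y z, dist x z <= dist x y + dist y z }.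

Section Defs.
Variable R : realType.

Definition cauchy_seq (M : Type) (d : metric R M) (u : nat -> M) : Prop :=
  forall e : R, 0 < e -> exists N : nat, forall m n, (N <= m)%N -> (N <= n)%N ->
    d (u m) (u n) < e.

Definition converges_to (M : Type) (d : metric R M) (u : nat -> M) (l : M) : Prop :=
  forall e : R, 0 < e -> exists N : nat, forall n, (N <= n)%N -> d (u n) l < e.

Definition complete (M : Type) (d : metric R M) : Prop :=
  forall u : nat -> M, cauchy_seq d u -> exists l, converges_to d u l.

Definition lipschitz (M N : Type) (dM : metric R M) (dN : metric R N)
  (f : M -> N) : Prop :=
  exists L : R, forall x y, dN (f x) (f y) <= L * dM x y.

Definition image_totally_bounded (M N : Type) (dN : metric R N) (f : M -> N) : Prop :=
  forall e : R, 0 < e -> exists (n : nat) (c : 'I_n -> N),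
    forall x : M, exists i : 'I_n, dN (f x) (c i) < e.

Definition uniformly_locally_flat (M N : Type) (dM : metric R M) (dN : metric R N)
  (f : M -> N) : Prop :=
  forall e : R, 0 < e -> exists2 del : R, 0 < del &
    forall x y, 0 < dM x y -> dM x y < del -> dN (f x) (f y) <= e * dM x y.

Variable b : bool.
Notation K := (scal R b).

Definition lip_le (M : Type) (d : metric R M) (g : M -> K) (L : R) : Prop :=
  forall x y, `|g x - g y| <= embed b (L * d x y).

Definition Lip0 (M : Type) (d : metric R M) (z : M) (g : M -> K) : Prop :=
  g z = 0 /\ exists L : R, lip_le d g L.

(** Functionals on Lip_0(M) are represented as maps (M -> K) -> K; only their
    values on Lip_0(M) matter. *)
Definition functional (M : Type) := (M -> K) -> K.

Definition dnorm_le (M : Type) (d : metric R M) (z : M) (phi : functional M)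
  (c : R) : Prop :=
  forall g : M -> K, g z = 0 -> lip_le d g 1 -> `|phi g| <= embed b c.

Definition in_dual (M : Type) (d : metric R M) (z : M) (phi : functional M) : Prop :=
  (forall (a : K) (g h : M -> K), Lip0 d z g -> Lip0 d z h ->
     phi (fun x => a * g x + h x) = a * phi g + phi h)
  /\ exists c : R, dnorm_le d z phi c.

Definition delta (M : Type) (x : M) : functional M := fun g => g x.

Definition molecule (M : Type) (n : nat) (a : 'I_n -> K) (p : 'I_n -> M)
  : functional M := fun g => \sum_(i < n) a i * delta (p i) g.

Definition fsub (M : Type) (phi psi : functional M) : functional M :=
  fun g => phi g - psi g.

(** Lipschitz-free space F(M): norm closure of span{delta(x)} in Lip_0(M)^*. *)
Definition in_free (M : Type) (d : metric R M) (z : M) (phi : functional M) : Prop :=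
  in_dual d z phi /\
  forall e : R, 0 < e -> exists (n : nat) (a : 'I_n -> K) (p : 'I_n -> M),
    dnorm_le d z (fsub phi (molecule a p)) e.

(** hat f : F(M) -> F(N), the restriction to F(M) of the adjoint of the
    composition operator g |-> g o f; it is the bounded linear operator with
    hat f (delta x) = delta (f x). *)
Definition hat (M N : Type) (f : M -> N) (phi : functional M) : functional N :=
  fun g => phi (g \o f).

(** T : F(M) -> F(N) is compact: the image of the closed unit ball of F(M) is
    relatively compact in F(N), stated sequentially (metric space). *)
Definition compact_op (M N : Type) (dM : metric R M) (zM : M)
  (dN : metric R N) (zN : N) (T : functional M -> functional N) : Prop :=
  forall u : nat -> functional M,
    (forall n, in_free dM zM (u n) /\ dnorm_le dM zM (u n) 1) ->
    exists (sigma : nat -> nat) (psi : functional N),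
      (forall n, (sigma n < sigma n.+1)%N) /\ in_free dN zN psi /\
      forall e : R, 0 < e -> exists N0 : nat, forall n, (N0 <= n)%N ->
        dnorm_le dN zN (fsub (T (u (sigma n))) psi) e.

End Defs.

(* The unit ball of Lip_0(N), composed with f, is totally bounded in Lip_0(M): two
   Lipschitz functions that are uniformly close on a finite net of f(M) are, after
   composition with f, close in Lipschitz norm, because flatness of f controls pairs at
   small distance while uniform closeness controls pairs at large distance.  Hence the
   values of the functionals hat f (u n) on that ball are, up to small error, vectors in a
   finite-dimensional bounded set; a diagonal extraction yields a subsequence that is
   Cauchy in the dual norm, and its limit again lies in the closed subspace F(N). *)

From HB Require Import structures.
From mathcomp Require Import all_boot all_order all_algebra.
From mathcomp Require Import reals complex classical_sets.
From mathcomp Require Import ring lra.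
From Stdlib Require Import ClassicalEpsilon Classical FunctionalExtensionality.
Set Implicit Arguments. Unset Strict Implicit. Unset Printing Implicit Defensive.
Import Order.TTheory GRing.Theory Num.Theory.
Local Open Scope ring_scope.

Section ScalarNorm.
Variables (R : realType) (b : bool).
Notation K := (scal R b).

(* The norm of [K] is [K]-valued; its real-valued copy lets [lra] work in both cases. *)
Definition knorm (x : K) : R :=
  match b return scal R b -> R with
  | true => fun z : R[i] => complex.Re `|z|
  | false => fun z : R => `|z|
  end x.

Lemma norm_knorm (x : K) : `|x| = embed b (knorm x).
Proof. by rewrite /knorm /embed; case: b x. Qed.

Lemma embedD (x y : R) : embed b (x + y) = embed b x + embed b y.
Proof. by case: b => //=; rewrite rmorphD. Qed.

Lemma embedM (x y : R) : embed b (x * y) = embed b x * embed b y.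
Proof. by case: b => //=; rewrite rmorphM. Qed.

Lemma embedN (x : R) : embed b (- x) = - embed b x.
Proof. by case: b => //=; rewrite rmorphN. Qed.

Lemma embed0 : embed b (0 : R) = 0.
Proof. by case: b. Qed.

Lemma ler_embed (x y : R) : (embed b x <= embed b y) = (x <= y).
Proof. by case: b => //=; rewrite lecR. Qed.

Lemma embed_inj : injective (@embed R b).
Proof. by move=> x y exy; apply/eqP; rewrite eq_le -!ler_embed exy lexx. Qed.

Lemma normr_embed (r : R) : `|embed b r| = embed b `|r|.
Proof.
have [r0|r0] := leP 0 r; first by rewrite !ger0_norm // -embed0 ler_embed.
rewrite !ltr0_norm ?embedN // lt_def -embed0 ler_embed (inj_eq embed_inj).
by rewrite eq_sym (lt_eqF r0) ltW.
Qed.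

Lemma norm_le_embed (x : K) (r : R) : (`|x| <= embed b r) = (knorm x <= r).
Proof. by rewrite norm_knorm ler_embed. Qed.

Lemma knorm_ge0 (x : K) : 0 <= knorm x.
Proof. by rewrite -ler_embed embed0 -norm_knorm. Qed.

Lemma knormD (x y : K) : knorm (x + y) <= knorm x + knorm y.
Proof. by rewrite -ler_embed embedD -!norm_knorm ler_normD. Qed.

Lemma knormN (x : K) : knorm (- x) = knorm x.
Proof. by apply: embed_inj; rewrite -!norm_knorm normrN. Qed.

Lemma knormM (x y : K) : knorm (x * y) = knorm x * knorm y.
Proof. by apply: embed_inj; rewrite embedM -!norm_knorm normrM. Qed.

Lemma knorm_embed (r : R) : knorm (embed b r) = `|r|.
Proof. by apply: embed_inj; rewrite -norm_knorm normr_embed. Qed.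

Lemma knorm0 : knorm 0 = 0.
Proof. by rewrite -embed0 knorm_embed normr0. Qed.

Lemma knorm_eq0 (x : K) : knorm x = 0 -> x = 0.
Proof. by move=> x0; apply/normr0_eq0; rewrite norm_knorm x0 embed0. Qed.

Lemma knorm_distC (x y : K) : knorm (x - y) = knorm (y - x).
Proof. by rewrite -knormN opprB. Qed.

Lemma knorm_distD (x y z : K) : knorm (x - z) <= knorm (x - y) + knorm (y - z).
Proof. by rewrite (_ : x - z = (x - y) + (y - z)) ?knormD // addrA subrK. Qed.

End ScalarNorm.

Lemma real_cauchy_cvg (R : realType) (x : nat -> R) :
  (forall e : R, 0 < e -> exists n0, forall n m, (n0 <= n)%N -> (n0 <= m)%N ->
     `|x n - x m| <= e) ->
  exists l, forall e : R, 0 < e -> exists n0, forall n, (n0 <= n)%N -> `|x n - l| <= e.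
Proof.
move=> x_cauchy; have [n1 near_n1] := x_cauchy 1 ltr01.
pose A y := exists n0, forall n, (n0 <= n)%N -> y <= x n.
have A_n1 : A (x n1 - 1).
  exists n1 => n n1n; have := near_n1 n1 n (leqnn _) n1n.
  by rewrite ler_norml => /andP[]; lra.
have A_ub : ubound A (x n1 + 1).
  move=> y [n0 y_le]; have := y_le (maxn n0 n1) (leq_maxl _ _).
  have := near_n1 (maxn n0 n1) n1 (leq_maxr _ _) (leqnn _).
  by rewrite ler_norml => /andP[]; lra.
exists (sup A) => e e0; have [n0 near_n0] := x_cauchy e e0; exists n0 => n n0n.
have sup_le : sup A <= x n + e.
  apply: ge_sup; first by exists (x n1 - 1).
  move=> y [m0 y_le]; have := y_le (maxn m0 n0) (leq_maxl _ _).
  have := near_n0 n (maxn m0 n0) n0n (leq_maxr _ _).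
  by rewrite ler_norml => /andP[]; lra.
have le_sup : x n - e <= sup A.
  apply: sup_upper_bound; first by split; [exists (x n1 - 1) | exists (x n1 + 1)].
  exists n0 => m n0m; have := near_n0 n m n0n n0m.
  by rewrite ler_norml => /andP[]; lra.
by rewrite ler_norml; apply/andP; split; lra.
Qed.

Lemma real_interval_net (R : realType) (r eta : R) : 0 < eta ->
  exists (J : finType) (T : J -> R), forall a, `|a| <= r -> exists j, `|a - T j| <= eta.
Proof.
move=> eta0; pose k := (Num.truncn (2 * r / eta)).+1.
exists 'I_k, (fun j => - r + (val j)%:R * eta) => a; rewrite ler_norml => /andP[ra ar].
have ar0 : 0 <= (a + r) / eta by rewrite divr_ge0 ?(ltW eta0) //; lra.
have jk : (Num.truncn ((a + r) / eta) < k)%N.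
  by rewrite ltnS le_truncn // ler_wpM2r ?invr_ge0 ?(ltW eta0) //; lra.
exists (Ordinal jk) => /=; have /andP[] := truncn_itv ar0.
rewrite ler_pdivlMr // ltr_pdivrMr // => lo; rewrite -natr1 mulrDl mul1r => hi.
by rewrite ler_norml; apply/andP; split; lra.
Qed.

Lemma normc_ge_Re_Im (R : rcfType) (z : R[i]) :
  `|complex.Re z| <= complex.Re `|z| /\ `|complex.Im z| <= complex.Re `|z|.
Proof.
rewrite normc_def /=; split; rewrite -sqrtr_sqr; apply: ler_wsqrtr.
  by rewrite lerDl sqr_ge0.
by rewrite lerDr sqr_ge0.
Qed.

Lemma normc_le_Re_Im (R : rcfType) (z : R[i]) :
  complex.Re `|z| <= `|complex.Re z| + `|complex.Im z|.
Proof.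
rewrite normc_def /=; set a := complex.Re z; set c := complex.Im z.
have sum_ge0 : 0 <= `|a| + `|c| by rewrite addr_ge0.
rewrite -(ger0_norm sum_ge0) -(sqrtr_sqr (`|a| + `|c|)); apply: ler_wsqrtr.
rewrite sqrrD -[a ^+ 2]real_normK ?num_real // -[c ^+ 2]real_normK ?num_real //.
by rewrite -addrA lerD2l lerDr mulrn_wge0 // mulr_ge0.
Qed.

Section Scalars.
Variables (R : realType) (b : bool).
Notation K := (scal R b).

(* Real and imaginary parts (the imaginary part is [0] when [K = R]). *)
Lemma scal_coordinates : exists (re im : K -> R) (mk : R -> R -> K),
  [/\ forall x y, re (x - y) = re x - re y, forall x y, im (x - y) = im x - im y,
      forall x, `|re x| <= knorm x /\ `|im x| <= knorm x
    & forall z r s, knorm (z - mk r s) <= `|re z - r| + `|im z - s|].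
Proof.
rewrite /knorm; case: b => /=.
  exists (@complex.Re R), (@complex.Im R), (fun r s => (r +i* s)%C).
  split; [by case=> ? ? [] | by case=> ? ? [] | exact: normc_ge_Re_Im |].
  by move=> z r s; apply: le_trans (normc_le_Re_Im _) _; case: z.
exists id, (fun=> 0), (fun r _ => r); split=> //=.
- by move=> *; rewrite subr0.
- by move=> x; rewrite normr0 normr_ge0.
- by move=> z r s; rewrite lerDl normr_ge0.
Qed.

Definition cvgK (x : nat -> K) (l : K) :=
  forall e : R, 0 < e -> exists n0, forall n, (n0 <= n)%N -> knorm (x n - l) <= e.

Definition cauchyK (x : nat -> K) :=
  forall e : R, 0 < e -> exists n0, forall n m, (n0 <= n)%N -> (n0 <= m)%N ->
    knorm (x n - x m) <= e.

Lemma knorm_cauchy_cvg (x : nat -> K) : cauchyK x -> exists l, cvgK x l.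
Proof.
move=> x_cauchy; have [re [im [mk [reB imB re_im_le mk_le]]]] := scal_coordinates.
have coord_cvg (c : K -> R) : (forall x y, c (x - y) = c x - c y) ->
    (forall x, `|c x| <= knorm x) -> exists l, forall e : R, 0 < e ->
    exists n0, forall n, (n0 <= n)%N -> `|c (x n) - l| <= e.
  move=> cB c_le; apply: real_cauchy_cvg => e e0; have [n0 near_n0] := x_cauchy e e0.
  by exists n0 => n m n0n n0m; rewrite -cB (le_trans (c_le _)) ?near_n0.
have [l1 cvg1] := coord_cvg re reB (fun x => (re_im_le x).1).
have [l2 cvg2] := coord_cvg im imB (fun x => (re_im_le x).2).
exists (mk l1 l2) => e e0.
have [n1 near1] := cvg1 _ (divr_gt0 e0 (ltr0Sn R 1)).
have [n2 near2] := cvg2 _ (divr_gt0 e0 (ltr0Sn R 1)).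
exists (maxn n1 n2) => n; rewrite geq_max => /andP[n1n n2n].
by apply: le_trans (mk_le _ _ _) _; have := near1 n n1n; have := near2 n n2n; lra.
Qed.

Definition limK (x : nat -> K) : K := epsilon (inhabits 0) (cvgK x).

Lemma limKP x : cauchyK x -> cvgK x (limK x).
Proof. by move=> /knorm_cauchy_cvg x_cvg; apply: epsilon_spec. Qed.

Lemma cvgK_le x l y c : cvgK x l ->
  (exists n0, forall n, (n0 <= n)%N -> knorm (y - x n) <= c) -> knorm (y - l) <= c.
Proof.
move=> x_cvg [n0 near_y]; apply/ler_addgt0Pr => e e0.
have [n1 near_l] := x_cvg e e0; pose n := maxn n0 n1.
apply: le_trans (knorm_distD _ (x n) _) _.
by rewrite lerD ?near_y ?near_l ?leq_maxl ?leq_maxr.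
Qed.

Lemma cvgK_unique x l l' : cvgK x l -> cvgK x l' -> l = l'.
Proof.
move=> cvg_l cvg_l'; apply/subr0_eq/knorm_eq0/eqP.
rewrite eq_le knorm_ge0 andbT; apply/ler_addgt0Pl => e e0; rewrite addr0.
apply: cvgK_le cvg_l' _; have [n0 near_n0] := cvg_l e e0.
by exists n0 => n n0n; rewrite knorm_distC near_n0.
Qed.

Lemma cvgK_comb (a : K) x y l l' : cvgK x l -> cvgK y l' ->
  cvgK (fun n => a * x n + y n) (a * l + l').
Proof.
move=> cvg_l cvg_l' e e0; have a1_gt0 : 0 < knorm a + 1 by have := knorm_ge0 a; lra.
have [n1 near1] := cvg_l _ (divr_gt0 e0 (mulr_gt0 (ltr0Sn R 1) a1_gt0)).
have [n2 near2] := cvg_l' _ (divr_gt0 e0 (ltr0Sn R 1)).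
exists (maxn n1 n2) => n; rewrite geq_max => /andP[n1n n2n].
rewrite (_ : _ - _ = a * (x n - l) + (y n - l')); last by ring.
apply: le_trans (knormD _ _) _; rewrite knormM.
have := near2 n n2n; have := near1 n n1n.
set eps := e / (2 * _) => xl yl'.
have eps_ge0 : 0 <= eps by rewrite divr_ge0 ?(ltW e0) // mulr_ge0 // ltW.
have a_eps : knorm a * knorm (x n - l) <= e / 2.
  apply: le_trans (ler_wpM2l (knorm_ge0 a) xl) _.
  rewrite (_ : e / 2 = (knorm a + 1) * eps); last by rewrite /eps; field; rewrite gt_eqF.
  by rewrite ler_wpM2r // lerDl.
lra.
Qed.

Lemma scal_ball_net (r eta : R) : 0 < eta ->
  exists (J : finType) (T : J -> K), forall a, knorm a <= r ->
    exists j, knorm (a - T j) <= eta.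
Proof.
move=> eta0; have [re [im [mk [_ _ re_im_le mk_le]]]] := scal_coordinates.
have [J [T T_net]] := real_interval_net r (divr_gt0 eta0 (ltr0Sn R 1)).
exists (J * J)%type, (fun j => mk (T j.1) (T j.2)) => a ar.
have [j1 near1] := T_net (re a) (le_trans (re_im_le a).1 ar).
have [j2 near2] := T_net (im a) (le_trans (re_im_le a).2 ar).
by exists (j1, j2); apply: le_trans (mk_le _ _ _) _; lra.
Qed.

Lemma vec_ball_net (I : finType) (r eta : R) : 0 < eta ->
  exists (J : finType) (V : J -> I -> K), forall a : I -> K,
    (forall i, knorm (a i) <= r) -> exists j, forall i, knorm (a i - V j i) <= eta.
Proof.
move=> eta0; have [J [T T_net]] := scal_ball_net r eta0.
exists {ffun I -> J}, (fun (h : {ffun I -> J}) i => T (h i)) => a ar.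
have [h h_near] := fin_all_exists (fun i => T_net (a i) (ar i)).
by exists (finfun h) => i; rewrite ffunE.
Qed.

End Scalars.

Lemma finType_infinitely_often (J : finType) (c : nat -> J) :
  exists j, forall n0, exists2 n, (n0 <= n)%N & c n = j.
Proof.
apply: NNPP => none.
have eventually_not j : exists n0, forall n, (n0 <= n)%N -> c n <> j.
  apply: NNPP => often; apply: none; exists j => n0.
  by apply: NNPP => not_hit; apply: often; exists n0 => n n0n cnj; apply: not_hit; exists n.
have [n0 n0_spec] := fin_all_exists eventually_not.
pose B := (\max_j n0 j)%N; by have := n0_spec (c B) B (leq_bigmax _); apply.
Qed.

Lemma constant_subsequence (J : finType) (c : nat -> J) :
  exists j (tau : nat -> nat), {homo tau : m n / (m < n)%N} /\ forall i, c (tau i) = j.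
Proof.
have [j often] := finType_infinitely_often c.
have [next next_spec] : exists next : nat -> nat, forall n, (n < next n)%N /\ c (next n) = j.
  apply: (choice (fun n m => (n < m)%N /\ c m = j)) => n.
  by have [m nm cm] := often n.+1; exists m.
exists j, (fun i => iter i.+1 next 0%N); split => [|i]; last exact: (next_spec _).2.
by apply: homo_ltn; [exact: ltn_trans | move=> i; exact: (next_spec _).1].
Qed.

Lemma homo_ltn_geq_id (tau : nat -> nat) : {homo tau : m n / (m < n)%N} ->
  forall i, (i <= tau i)%N.
Proof. by move=> tau_incr; elim=> // i ih; apply: leq_ltn_trans ih (tau_incr _ _ _). Qed.

Lemma diagonal_subsequence (Q : nat -> nat -> nat -> Prop) :
  (forall k (S : nat -> nat), {homo S : m n / (m < n)%N} ->
     exists2 tau : nat -> nat, {homo tau : m n / (m < n)%N} &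
       forall i j, Q k (S (tau i)) (S (tau j))) ->
  exists2 sigma : nat -> nat, {homo sigma : m n / (m < n)%N} &
    forall k n m, (k < n)%N -> (k < m)%N -> Q k (sigma n) (sigma m).
Proof.
move=> refine_ex; pose incr (S : nat -> nat) := {homo S : m n / (m < n)%N}.
pose refines k (S tau : nat -> nat) :=
  incr S -> incr tau /\ forall i j, Q k (S (tau i)) (S (tau j)).
have [refine refine_spec] : exists refine, forall k S, refines k S (refine k S).
  apply: (choice (fun k r => forall S, refines k S (r S))) => k.
  apply: (choice (refines k)) => S.
  have [S_incr|S_not] := classic (incr S).
    by have [tau ? ?] := refine_ex k S S_incr; exists tau.
  by exists id => /S_not.
(* [ext k] composes the first [k] refinements; the diagonal [ext n n] is, from index
   [k.+1] on, a subsequence of [ext k.+1]. *)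
pose fix ext k := if k is k'.+1 then ext k' \o refine k' (ext k') else id.
have ext_incr k : incr (ext k).
  by elim: k => [//|k ih] /= m n mn; apply/ih/(refine_spec _ _ ih).1.
have ext_factor k d x : exists i, ext (d + k)%N x = ext k i.
  elim: d x => [|d ih] x; first by exists x.
  by rewrite addSn /=; apply: ih.
exists (fun n => ext n n) => [|k n m kn km].
  apply: homo_ltn => [|n /=]; first exact: ltn_trans.
  have [tau_incr _] := refine_spec n _ (ext_incr n).
  by apply: ext_incr; apply: leq_trans (homo_ltn_geq_id tau_incr n.+1).
have [p] := ext_factor k.+1 (n - k.+1)%N n; rewrite subnK // => ->.
have [q] := ext_factor k.+1 (m - k.+1)%N m; rewrite subnK // => ->.
exact: (refine_spec k _ (ext_incr k)).2.
Qed.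

Lemma uniformly_close_subsequence (R : realType) (b : bool) (Y : Type)
    (w : nat -> Y -> scal R b) (B : Y -> Prop) (J : finType) (G : J -> Y) (r e : R) :
  0 < e -> (forall n j, knorm (w n (G j)) <= r) ->
  (forall y, B y -> exists j, forall n, knorm (w n y - w n (G j)) <= e) ->
  exists2 tau : nat -> nat, {homo tau : m n / (m < n)%N} &
    forall i i' y, B y -> knorm (w (tau i) y - w (tau i') y) <= 4 * e.
Proof.
move=> e0 w_bdd G_net; have [J' [V V_net]] := vec_ball_net b J r e0.
have [c c_near] : exists c : nat -> J', forall n j, knorm (w n (G j) - V (c n) j) <= e.
  apply: (choice (fun n j' => forall j, knorm (w n (G j) - V j' j) <= e)) => n.
  by apply: V_net => j; apply: w_bdd.
have [j' [tau [tau_incr c_tau]]] := constant_subsequence c.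
exists tau => // i i' y By; have [j y_near] := G_net y By.
have := c_near (tau i) j; have := c_near (tau i') j; rewrite !c_tau.
rewrite knorm_distC => near_i' near_i; have := y_near (tau i); have := y_near (tau i').
rewrite (knorm_distC (w (tau i') y)) => near_y' near_y.
apply: le_trans (knorm_distD _ (w (tau i) (G j)) _) _.
apply: le_trans (lerD (lexx _) (knorm_distD _ (V j' j) _)) _.
apply: le_trans (lerD (lexx _) (lerD (lexx _) (knorm_distD _ (w (tau i') (G j)) _))) _.
lra.
Qed.

Section LipschitzDual.
Variables (R : realType) (b : bool) (X : Type) (d : metric R X) (z : X).
Notation K := (scal R b).
Notation functional := (functional R b X).

Definition lip0_linear (phi : functional) := forall (a : K) (g h : X -> K),
  Lip0 d z g -> Lip0 d z h -> phi (fun x => a * g x + h x) = a * phi g + phi h.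

Definition lip_unit_ball (g : X -> K) := g z = 0 /\ lip_le d g 1.

Definition dual_cauchy (v : nat -> functional) :=
  forall e : R, 0 < e -> exists n0, forall n m, (n0 <= n)%N -> (n0 <= m)%N ->
    dnorm_le d z (fsub (v n) (v m)) e.

Lemma lip_leP (g : X -> K) L :
  lip_le d g L <-> forall x y, knorm (g x - g y) <= L * d x y.
Proof. by split=> g_lip x y; have := g_lip x y; rewrite /lip_le norm_le_embed. Qed.

Lemma lip_le_mono (g : X -> K) L L' : L <= L' -> lip_le d g L -> lip_le d g L'.
Proof.
move=> LL' /lip_leP g_lip; apply/lip_leP => x y.
by apply: le_trans (g_lip x y) _; rewrite ler_wpM2r ?dist_ge0.
Qed.

Lemma lip_le_sub (g h : X -> K) Lg Lh : lip_le d g Lg -> lip_le d h Lh ->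
  lip_le d (fun x => g x - h x) (Lg + Lh).
Proof.
move=> /lip_leP g_lip /lip_leP h_lip; apply/lip_leP => x y.
rewrite (_ : _ - _ = (g x - g y) - (h x - h y)); last by ring.
by apply: le_trans (knormD _ _) _; rewrite knormN mulrDl lerD.
Qed.

Lemma lip_le_of_local_bound (g : X -> K) (e del : R) : 0 <= e -> 0 < del ->
  (forall x y, d x y < del -> knorm (g x - g y) <= e * d x y) ->
  (forall x, knorm (g x) <= e * del / 2) -> lip_le d g e.
Proof.
move=> e0 del0 g_local g_small; apply/lip_leP => x y.
have [/g_local //|far] := ltP (d x y) del.
apply: le_trans (knormD _ _) _; rewrite knormN.
have := ler_wpM2l e0 far; have := g_small x; have := g_small y; lra.
Qed.

Lemma lip0_zero : Lip0 d z (fun=> 0 : K).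
Proof. by split=> //; exists 0; apply/lip_leP => x y; rewrite subr0 knorm0 mul0r. Qed.

Lemma lip0_comb (a : K) (g h : X -> K) : Lip0 d z g -> Lip0 d z h ->
  Lip0 d z (fun x => a * g x + h x).
Proof.
move=> [g0 [Lg /lip_leP g_lip]] [h0 [Lh /lip_leP h_lip]].
split; first by rewrite g0 h0 mulr0 addr0.
exists (knorm a * Lg + Lh); apply/lip_leP => x y.
rewrite (_ : _ - _ = a * (g x - g y) + (h x - h y)); last by ring.
apply: le_trans (knormD _ _) _; rewrite knormM mulrDl -mulrA.
by rewrite lerD ?h_lip // ler_wpM2l ?knorm_ge0.
Qed.

Section Linear.
Variable phi : functional.
Hypothesis phi_linear : lip0_linear phi.

Lemma linear_zero : phi (fun=> 0) = 0.
Proof.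
have := phi_linear 1 lip0_zero lip0_zero; rewrite /= mul1r addr0 mul1r => phi00.
by apply: (addrI (phi (fun=> 0))); rewrite addr0 -phi00.
Qed.

Lemma linear_scale (a : K) g : Lip0 d z g -> phi (fun x => a * g x) = a * phi g.
Proof.
move=> g_lip0; have := phi_linear a g_lip0 lip0_zero; rewrite linear_zero addr0.
suff -> : (fun x => a * g x + 0) = (fun x => a * g x) by [].
by apply: functional_extensionality => x; rewrite addr0.
Qed.

Lemma linear_sub g h : Lip0 d z g -> Lip0 d z h ->
  phi (fun x => g x - h x) = phi g - phi h.
Proof.
move=> g_lip0 h_lip0; rewrite addrC -mulN1r -phi_linear //.
by congr phi; apply: functional_extensionality => x; rewrite mulN1r addrC.
Qed.

End Linear.

(* A function with Lipschitz constant [L] is [L] times an element of the unit ball. *)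
Lemma dnorm_le_lip (phi : functional) c g L : lip0_linear phi -> dnorm_le d z phi c ->
  g z = 0 -> lip_le d g L -> 0 < L -> knorm (phi g) <= c * L.
Proof.
move=> phi_lin phi_le g0 g_lip L0; pose g' x := embed b L^-1 * g x.
have g'_lip : lip_le d g' 1.
  move/lip_leP: g_lip => g_lip; apply/lip_leP => x y.
  rewrite /g' -mulrBr knormM knorm_embed ger0_norm ?invr_ge0 ?(ltW L0) //.
  by rewrite mul1r ler_pdivrMl.
have g'0 : g' z = 0 by rewrite /g' g0 mulr0.
have := phi_le g' g'0 g'_lip.
rewrite norm_le_embed /g' (linear_scale phi_lin); last by split=> //; exists L.
rewrite knormM knorm_embed ger0_norm ?invr_ge0 ?(ltW L0) //.
by rewrite ler_pdivrMl // mulrC.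
Qed.

Arguments dnorm_le_lip {phi c g L}.

Lemma molecule_linear n (a : 'I_n -> K) (p : 'I_n -> X) : lip0_linear (molecule a p).
Proof.
move=> c g h _ _; rewrite /molecule /delta mulr_sumr -big_split /=.
by apply: eq_bigr => i _; ring.
Qed.

Lemma fsub_linear (phi psi : functional) : lip0_linear phi -> lip0_linear psi ->
  lip0_linear (fsub phi psi).
Proof.
by move=> phi_lin psi_lin a g h g_lip0 h_lip0; rewrite /fsub phi_lin // psi_lin //; ring.
Qed.

Lemma dnorm_le_mono (phi : functional) c c' :
  c <= c' -> dnorm_le d z phi c -> dnorm_le d z phi c'.
Proof.
by move=> cc' phi_le g g0 g_lip; apply: le_trans (phi_le g g0 g_lip) _; rewrite ler_embed.
Qed.

Lemma dnorm_le_fsubC (phi psi : functional) e :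
  dnorm_le d z (fsub phi psi) e -> dnorm_le d z (fsub psi phi) e.
Proof. by move=> le_e g g0 g_lip; rewrite /fsub -normrN opprB le_e. Qed.

Lemma dnorm_le_fsub_trans (phi psi chi : functional) e e' :
  dnorm_le d z (fsub phi psi) e -> dnorm_le d z (fsub psi chi) e' ->
  dnorm_le d z (fsub phi chi) (e + e').
Proof.
move=> le_e le_e' g g0 g_lip; have := le_e g g0 g_lip; have := le_e' g g0 g_lip.
rewrite /fsub !norm_le_embed => ? ?.
by apply: le_trans (knorm_distD _ (psi g) _) _; lra.
Qed.

Lemma dnorm_le_of_fsub (phi psi : functional) c e :
  dnorm_le d z phi c -> dnorm_le d z (fsub phi psi) e -> dnorm_le d z psi (c + e).
Proof.
move=> phi_le le_e g g0 g_lip; have := phi_le g g0 g_lip; have := le_e g g0 g_lip.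
rewrite /fsub !norm_le_embed => ? ?.
have := knorm_distD (psi g) (phi g) 0; rewrite !subr0 knorm_distC; lra.
Qed.
Lemma free_cauchy_cvg (v : nat -> functional) :
  (forall n, in_free d z (v n)) -> dual_cauchy v ->
  exists psi, in_free d z psi /\ forall e : R, 0 < e -> exists n0, forall n,
     (n0 <= n)%N -> dnorm_le d z (fsub (v n) psi) e.
Proof.
move=> v_free v_cauchy; have v_lin n : lip0_linear (v n) by have [[]] := v_free n.
pose psi g := limK (fun n => v n g).
have psi_cvg g : Lip0 d z g -> cvgK (fun n => v n g) (psi g).
  move=> [g0 [L g_lip]]; apply: limKP => e e0; pose L' := Num.max L 1.
  have L'0 : 0 < L' by rewrite lt_max ltr01 orbT.
  have g_lip' : lip_le d g L' by apply: lip_le_mono g_lip; rewrite le_max lexx.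
  have [n0 near] := v_cauchy (e / L') (divr_gt0 e0 L'0).
  exists n0 => n m n0n n0m; rewrite -[e](divfK (lt0r_neq0 L'0)).
  exact: dnorm_le_lip (fsub_linear (v_lin n) (v_lin m)) (near n m n0n n0m) g0 g_lip' L'0.
have psi_lin : lip0_linear psi.
  move=> a g h g_lip0 h_lip0; apply: (cvgK_unique (psi_cvg _ (lip0_comb a g_lip0 h_lip0))).
  have -> : (fun n => v n (fun x => a * g x + h x)) = (fun n => a * v n g + v n h).
    by apply: functional_extensionality => n; apply: v_lin.
  exact: cvgK_comb (psi_cvg _ g_lip0) (psi_cvg _ h_lip0).
have psi_close e : 0 < e -> exists n0, forall n, (n0 <= n)%N ->
    dnorm_le d z (fsub (v n) psi) e.
  move=> e0; have [n0 near] := v_cauchy e e0; exists n0 => n n0n g g0 g_lip.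
  rewrite norm_le_embed; apply: cvgK_le (psi_cvg g (conj g0 (ex_intro _ 1 g_lip))) _.
  by exists n0 => m n0m; rewrite -norm_le_embed; apply: near.
exists psi; split=> //; split.
  split=> //; have [n0 near] := psi_close 1 ltr01; have [[_ [c v_le]] _] := v_free n0.
  by exists (c + 1); apply: dnorm_le_of_fsub v_le (near n0 (leqnn _)).
move=> e e0; have [n0 near] := psi_close (e / 2) (divr_gt0 e0 (ltr0Sn R 1)).
have [_ approx] := v_free n0.
have [n [a [p v_mol]]] := approx (e / 2) (divr_gt0 e0 (ltr0Sn R 1)).
exists n, a, p; rewrite (splitr e).
exact: dnorm_le_fsub_trans (dnorm_le_fsubC (near n0 (leqnn _))) v_mol.
Qed.

End LipschitzDual.

Lemma lip_ball_finite_net (R : realType) (b : bool) (N : Type) (dN : metric R N) (zN : N)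
    (I : finType) (c : I -> N) (eta : R) : 0 < eta ->
  exists (J : finType) (G : J -> N -> scal R b),
    (forall j, lip_unit_ball dN zN (G j)) /\
    forall g, lip_unit_ball dN zN g ->
      exists j, forall i, knorm (g (c i) - G j (c i)) <= 2 * eta.
Proof.
move=> eta0; have [J [V V_net]] := vec_ball_net b I (\sum_i dN (c i) zN) eta0.
pose near_V j g := forall i, knorm (g (c i) - V j i) <= eta.
(* [G j] is a member of the ball that is [eta]-close to [V j] on the [c i], if there is one. *)
pose G_spec j g :=
  lip_unit_ball dN zN g /\ ((exists g', lip_unit_ball dN zN g' /\ near_V j g') -> near_V j g).
pose G j := epsilon (inhabits (fun=> 0)) (G_spec j).
have G_specP j : G_spec j (G j).
  apply: epsilon_spec.
  have [[g' g'_spec]|none] := classic (exists g', lip_unit_ball dN zN g' /\ near_V j g').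
    by exists g'; split=> [|_]; case: g'_spec.
  exists (fun=> 0); split=> [|/none //]; split=> //.
  by apply/lip_leP => x y; rewrite subr0 knorm0 mul1r dist_ge0.
exists J, G; split=> [j|g [g0 g_lip]]; first exact: (G_specP j).1.
have [j g_near] : exists j, near_V j g.
  apply: V_net => i; rewrite -[g (c i)]subr0 -g0.
  apply: le_trans (_ : 1 * dN (c i) zN <= _); first by move/lip_leP: g_lip; apply.
  rewrite mul1r (bigD1 i) //= lerDl sumr_ge0 // => k _; exact: dist_ge0.
have G_near := (G_specP j).2 (ex_intro _ g (conj (conj g0 g_lip) g_near)).
exists j => i; apply: le_trans (knorm_distD _ (V j i) _) _.
by rewrite (knorm_distC (V j i)); have := g_near i; have := G_near i; lra.
Qed.

Section Hat.
Variables (R : realType) (b : bool) (M N : Type) (dM : metric R M) (dN : metric R N).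
Variables (zM : M) (zN : N) (f : M -> N) (Lf : R).
Hypotheses (Lf_gt0 : 0 < Lf) (f_lip : forall x y, dN (f x) (f y) <= Lf * dM x y).
Hypothesis f0 : f zM = zN.
Notation K := (scal R b).

Lemma lip_le_comp (g : N -> K) c : 0 <= c -> lip_le dN g c -> lip_le dM (g \o f) (c * Lf).
Proof.
move=> c0 /lip_leP g_lip; apply/lip_leP => x y; apply: le_trans (g_lip _ _) _.
by rewrite -mulrA ler_wpM2l.
Qed.

Lemma lip0_comp (g : N -> K) : Lip0 dN zN g -> Lip0 dM zM (g \o f).
Proof.
move=> [g0 [c g_lip]]; split; first by rewrite /= f0.
exists (Num.max c 0 * Lf); apply: lip_le_comp; first by rewrite le_max lexx orbT.
by apply: lip_le_mono g_lip; rewrite le_max lexx.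
Qed.

Lemma hat_linear (phi : functional R b M) :
  lip0_linear dM zM phi -> lip0_linear dN zN (hat f phi).
Proof. by move=> phi_lin a g h g_lip0 h_lip0; apply: phi_lin; apply: lip0_comp. Qed.

Lemma dnorm_le_hat (phi : functional R b M) c : lip0_linear dM zM phi ->
  dnorm_le dM zM phi c -> dnorm_le dN zN (hat f phi) (c * Lf).
Proof.
move=> phi_lin phi_le g g0 g_lip; rewrite norm_le_embed.
apply: (dnorm_le_lip phi_lin phi_le) => //; first by rewrite /= f0.
by rewrite -[Lf]mul1r; apply: lip_le_comp.
Qed.

Lemma hat_in_free (phi : functional R b M) :
  in_free dM zM phi -> in_free dN zN (hat f phi).
Proof.
move=> [[phi_lin [c phi_le]] approx]; split.
  by split; [exact: hat_linear | exists (c * Lf); exact: dnorm_le_hat].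
move=> e e0; have [n [a [p phi_mol]]] := approx (e / Lf) (divr_gt0 e0 Lf_gt0).
exists n, a, (f \o p); rewrite -[e](divfK (lt0r_neq0 Lf_gt0)).
exact: dnorm_le_hat (fsub_linear phi_lin (molecule_linear _ _)) phi_mol.
Qed.

End Hat.

Section Compactness.
Variables (R : realType) (b : bool) (M N : Type) (dM : metric R M) (dN : metric R N).
Variables (zM : M) (zN : N) (f : M -> N) (Lf : R).
Hypotheses (Lf_gt0 : 0 < Lf) (f_lip : forall x y, dN (f x) (f y) <= Lf * dM x y).
Hypotheses (f0 : f zM = zN) (f_tb : image_totally_bounded dN f).
Hypothesis f_flat : uniformly_locally_flat dM dN f.
Notation K := (scal R b).

Lemma lip_ball_comp_net (e : R) : 0 < e ->
  exists (J : finType) (G : J -> N -> K), (forall j, lip_unit_ball dN zN (G j)) /\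
    forall g, lip_unit_ball dN zN g -> exists j, lip_le dM (fun x => g (f x) - G j (f x)) e.
Proof.
move=> e0; have [del del0 f_flat_e] := f_flat (divr_gt0 e0 (ltr0Sn R 1)).
pose eta := e * del / 8; have eta0 : 0 < eta by rewrite divr_gt0 ?mulr_gt0.
have [n [c c_net]] := f_tb eta0.
have [J [G [G_ball G_net]]] := lip_ball_finite_net b dN zN c eta0.
exists J, G; split=> // g g_ball; have [j g_near] := G_net g g_ball; exists j.
have /lip_leP h_lip := lip_le_sub g_ball.2 (G_ball j).2.
apply: lip_le_of_local_bound (ltW e0) del0 _ _ => [x y dxy | x].
  have [dxy0|dxy_neq0] := eqVneq (dM x y) 0.
    by rewrite dxy0 mulr0 ((dist_eq0 dM x y).1 dxy0) subrr knorm0.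
  have dxy_gt0 : 0 < dM x y by rewrite lt_def dxy_neq0 dist_ge0.
  have := f_flat_e x y dxy_gt0 dxy; have := h_lip (f x) (f y); lra.
have [i fx_near] := c_net x; have := g_near i; have := h_lip (f x) (c i).
have := knorm_distD (g (f x) - G j (f x)) (g (c i) - G j (c i)) 0.
move: fx_near; rewrite !subr0 /eta; lra.
Qed.

Lemma hat_close_subsequence (u : nat -> functional R b M) (e : R) : 0 < e ->
  (forall n, lip0_linear dM zM (u n) /\ dnorm_le dM zM (u n) 1) ->
  exists2 tau : nat -> nat, {homo tau : m n / (m < n)%N} &
    forall i j, dnorm_le dN zN (fsub (hat f (u (tau i))) (hat f (u (tau j)))) e.
Proof.
move=> e0 u_ball; have e4 : 0 < e / 4 by rewrite divr_gt0.
have [J [G [G_ball G_net]]] := lip_ball_comp_net e4.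
have [|g g_ball|tau tau_incr tau_close] := @uniformly_close_subsequence R b _
    (fun n => hat f (u n)) (lip_unit_ball dN zN) J G Lf (e / 4) e4.
- move=> n j; have [Gj0 Gj_lip] := G_ball j; rewrite -norm_le_embed -[Lf]mul1r.
  exact: (dnorm_le_hat Lf_gt0 f_lip f0 (u_ball n).1 (u_ball n).2) Gj0 Gj_lip.
- have [j g_near] := G_net g g_ball; exists j => n.
  have comp_lip0 (h : N -> K) : lip_unit_ball dN zN h -> Lip0 dM zM (h \o f).
    by move=> [h0 h_lip]; apply: (lip0_comp f_lip f0); split=> //; exists 1.
  have := linear_sub (u_ball n).1 (comp_lip0 _ g_ball) (comp_lip0 _ (G_ball j)).
  rewrite /hat => <-; rewrite -[e / 4]mul1r.
  apply: dnorm_le_lip (u_ball n).1 (u_ball n).2 _ g_near e4.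
  by rewrite /= f0 g_ball.1 (G_ball j).1 subrr.
have -> : e = 4 * (e / 4) by rewrite mulrCA divff ?mulr1 // pnatr_eq0.
exists tau => // i j g g0 g_lip; rewrite norm_le_embed.
exact: tau_close i j g (conj g0 g_lip).
Qed.

Lemma hat_cauchy_subsequence (u : nat -> functional R b M) :
  (forall n, lip0_linear dM zM (u n) /\ dnorm_le dM zM (u n) 1) ->
  exists2 sigma : nat -> nat, {homo sigma : m n / (m < n)%N} &
    dual_cauchy dN zN (fun n => hat f (u (sigma n))).
Proof.
move=> u_ball; have inv_gt0 k : 0 < k.+1%:R^-1 :> R by rewrite invr_gt0 ltr0Sn.
have [sigma sigma_incr sigma_close] := @diagonal_subsequence
    (fun k n m => dnorm_le dN zN (fsub (hat f (u n)) (hat f (u m))) k.+1%:R^-1)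
    (fun k S _ => hat_close_subsequence (inv_gt0 k) (fun n => u_ball (S n))).
exists sigma => // e e0; exists (Num.truncn e^-1).+1 => n m n_gt m_gt.
apply: dnorm_le_mono (sigma_close _ _ _ n_gt m_gt).
rewrite -[X in _ <= X]invrK lef_pV2 ?posrE ?invr_gt0 //; exact: ltW (truncnS_gt _).
Qed.

End Compactness.

Theorem corollary2p9 (R : realType) (b : bool)
  (M N : Type) (dM : metric R M) (dN : metric R N) (zM : M) (zN : N)
  (f : M -> N) :
  complete dM -> complete dN ->
  lipschitz dM dN f -> f zM = zN ->
  image_totally_bounded dN f ->
  uniformly_locally_flat dM dN f ->
  @compact_op R b M N dM zM dN zN (@hat R b M N f).
Proof.
move=> _ _ [L f_lip] f0 f_tb f_flat u u_ball.
pose Lf := Num.max L 1; have Lf_gt0 : 0 < Lf by rewrite lt_max ltr01 orbT.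
have f_lip' x y : dN (f x) (f y) <= Lf * dM x y.
  by apply: le_trans (f_lip x y) _; rewrite ler_wpM2r ?dist_ge0 // le_max lexx.
have [sigma sigma_incr hat_cauchy] := hat_cauchy_subsequence Lf_gt0 f_lip' f0 f_tb f_flat
  (fun n => conj (u_ball n).1.1.1 (u_ball n).2).
have [psi [psi_free hat_cvg]] := free_cauchy_cvg
  (fun n => hat_in_free Lf_gt0 f_lip' f0 (u_ball (sigma n)).1) hat_cauchy.
by exists sigma, psi; split=> // n; apply: sigma_incr.
Qed.
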